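(* $KU^+_1(\mathcal{O}(S^2_q))$ is non-trivial.
   Context: $q$ is the deformation parameter (a real number). The standard Podleś sphere $\mathcal{O}(S^2_q)$ is the algebra generated by $z_{-1},z_0,z_1$ subject to $z_0^2-qz_1z_{-1}-q^{-1}z_{-1}z_1=1$, $(1-q^2)z_0^2+qz_{-1}z_1-qz_1z_{-1}=0$, $z_{-1}z_0=q^2z_0z_{-1}$, $z_0z_1=q^2z_1z_0$, with $*$-structure $z_i^*=(-q)^iz_{-i}$ ($i=-1,0,1$). For a $*$-algebra $\mathcal{A}$ and $\epsilon=\pm1$, $U^\epsilon_n(\mathcal{A})$ is the group of $2n\times2n$ matrices $M=\begin{pmatrix}A&B\\C&D\end{pmatrix}$ over $\mathcal{A}$ with $M^\star M=MM^\star=I_{2n}$, where $M^\star=\begin{pmatrix}D^\dagger&\epsilon B^\dagger\\ \epsilon C^\dagger&A^\dagger\end{pmatrix}$ and $\dagger$ is the transpose composed with entrywise $*$; $U^\epsilon(\mathcal{A})=\mathrm{colim}_nU^\epsilon_n(\mathcal{A})$. The Hermitian $K$-group $KU^\epsilon_1(\mathcal{A})=\pi_1(BU^\epsilon(\mathcal{A})^+)$ (Quillen plus construction) is the abelianization $U^\epsilon(\mathcal{A})/[U^\epsilon(\mathcal{A}),U^\epsilon(\mathcal{A})]$. Here $KU^+_1$ denotes $KU^\epsilon_1$ with $\epsilon=+1$. *)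

From HB Require Import structures.
From mathcomp Require Import all_boot all_order all_algebra.
From mathcomp Require Import complex.
From mathcomp Require Import reals.
Set Implicit Arguments. Unset Strict Implicit. Unset Printing Implicit Defensive.
Import Order.TTheory GRing.Theory Num.Theory.
Local Open Scope ring_scope.

Section Defs.
Variable R : realType.
Local Notation C := (R[i]).

Definition is_star (A : algType C) (s : A -> A) : Prop :=
  [/\ forall x y, s (x + y) = s x + s y,
      forall x y, s (x * y) = s y * s x,
      forall x, s (s x) = x &
      forall (c : C) x, s (c *: x) = conjc c *: s x].

(* the defining relations and *-structure of the standard Podles sphere;
   zm, z0, z1 stand for z_{-1}, z_0, z_1 *)
Definition podles_rels (q : R) (A : algType C) (s : A -> A) (zm z0 z1 : A) : Prop :=
  [/\ z0 ^+ 2 - (q%:C)%C *: (z1 * zm) - (q^-1%:C)%C *: (zm * z1) = 1,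
      ((1 - q ^+ 2)%:C)%C *: z0 ^+ 2 + (q%:C)%C *: (zm * z1) - (q%:C)%C *: (z1 * zm) = 0,
      zm * z0 = ((q ^+ 2)%:C)%C *: (z0 * zm),
      z0 * z1 = ((q ^+ 2)%:C)%C *: (z1 * z0) &
      [/\ s zm = ((- q)^-1%:C)%C *: z1, s z0 = z0 & s z1 = ((- q)%:C)%C *: zm]].

Definition podles_hom (A B : algType C) (sA : A -> A) (sB : B -> B)
  (zm z0 z1 : A) (wm w0 w1 : B) (f : A -> B) : Prop :=
  [/\ forall x y, f (x + y) = f x + f y,
      forall x y, f (x * y) = f x * f y,
      f 1 = 1,
      forall (c : C) x, f (c *: x) = c *: f x &
      [/\ forall x, f (sA x) = sB (f x), f zm = wm, f z0 = w0 & f z1 = w1]].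

Definition is_podles_sphere (q : R) (A : algType C) (s : A -> A) (zm z0 z1 : A)
  : Prop :=
  is_star s /\ podles_rels q s zm z0 z1 /\
  forall (B : algType C) (sB : B -> B) (wm w0 w1 : B),
    is_star sB -> podles_rels q sB wm w0 w1 ->
    exists f : A -> B, podles_hom s sB zm z0 z1 wm w0 w1 f /\
      forall g : A -> B, podles_hom s sB zm z0 z1 wm w0 w1 g -> g =1 f.

Definition mxdag (A : algType C) (s : A -> A) m n (M : 'M[A]_(m, n)) : 'M[A]_(n, m) :=
  map_mx s M^T.

Definition mxstar (A : algType C) (s : A -> A) (eps : A) n (M : 'M[A]_(n + n))
  : 'M[A]_(n + n) :=
  block_mx (mxdag s (drsubmx M)) (eps *: mxdag s (ursubmx M))
           (eps *: mxdag s (dlsubmx M)) (mxdag s (ulsubmx M)).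

Definition unitary_eps (A : algType C) (s : A -> A) (eps : A) n (M : 'M[A]_(n + n))
  : Prop :=
  mxstar s eps M *m M = 1%:M /\ M *m mxstar s eps M = 1%:M.

Definition stab (A : algType C) n k (M : 'M[A]_(n + n)) : 'M[A]_((n + k) + (n + k)) :=
  block_mx (block_mx (ulsubmx M) 0 0 1%:M) (block_mx (ursubmx M) 0 0 0)
           (block_mx (dlsubmx M) 0 0 0) (block_mx (drsubmx M) 0 0 1%:M).

(* M is a product of commutators of elements of U^eps_N(A);
   the inverse of a unitary g is mxstar g *)
Definition comm_prod (A : algType C) (s : A -> A) (eps : A) N (M : 'M[A]_(N + N))
  : Prop :=
  exists l : seq ('M[A]_(N + N) * 'M[A]_(N + N)),
    (forall p, p \in l -> unitary_eps s eps p.1 /\ unitary_eps s eps p.2) /\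
    M = foldr (fun p acc => p.1 *m p.2 *m mxstar s eps p.1 *m mxstar s eps p.2 *m acc)
              1%:M l.

(* KU^eps_1(A) = U^eps(A)/[U^eps(A),U^eps(A)] is non-trivial: some element of
   the colimit U^eps(A) is not in its commutator subgroup *)
Definition KU1_nontrivial (A : algType C) (s : A -> A) (eps : A) : Prop :=
  exists n (M : 'M[A]_(n + n)),
    unitary_eps s eps M /\ forall k, ~ comm_prod s eps (stab k M).

End Defs.

(* Composing with the character of O(S^2_q) that kills z_0 turns unitaries into
   unitaries and products of commutators into products of commutators in the
   commutative *-algebra C, where every such product has determinant 1, since
   [mxstar g] is the inverse of [g]. The scalar unitary [i * I_2] is therefore not
   stably a product of commutators: its image has determinant [i ^+ 2 = -1]. *)
From HB Require Import structures.
From mathcomp Require Import all_boot all_order all_algebra.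
From mathcomp Require Import complex reals.
From mathcomp Require Import ring.
Set Implicit Arguments.
Unset Strict Implicit.
Local Open Scope ring_scope.
Import Order.TTheory GRing.Theory Num.Theory.

Section StarAlgebra.
Variables (R : realType) (A : algType R[i]) (s : A -> A).
Hypothesis s_star : is_star s.

Lemma star0 : s 0 = 0.
Proof.
case: s_star => sD _ _ _.
by apply: (addrI (s 0)); rewrite -sD !addr0.
Qed.

Lemma star1 : s 1 = 1.
Proof.
case: s_star => _ sM sK _.
by rewrite -[LHS]mulr1 -[X in _ * X]sK -sM mulr1 sK.
Qed.

Lemma star_alg (c : R[i]) : s c%:A = (c^*)%C%:A.
Proof. by case: s_star => _ _ _ sZ; rewrite sZ star1. Qed.

Lemma mxstar_scalar eps n (a : A) :
  mxstar s eps (a%:M : 'M_(n + n)) = (s a)%:M.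
Proof.
have mxdag_scalar m (b : A) : mxdag s (b%:M : 'M_m) = (s b)%:M.
  by apply/matrixP=> i j; rewrite !mxE eq_sym; case: (i == j); rewrite ?star0.
have mxdag0 m : mxdag s (0 : 'M_m) = 0.
  by apply/matrixP=> i j; rewrite !mxE star0.
rewrite /mxstar [a%:M]scalar_mx_block [(s a)%:M]scalar_mx_block.
by rewrite block_mxKul block_mxKur block_mxKdl block_mxKdr !mxdag0 !scaler0 !mxdag_scalar.
Qed.

Lemma unitary_eps_scalar eps n (a : A) :
  s a * a = 1 -> a * s a = 1 -> unitary_eps s eps (a%:M : 'M_(n + n)).
Proof. by move=> saa asa; rewrite /unitary_eps mxstar_scalar -!scalar_mxM saa asa. Qed.

Lemma unitary_eps_unit_alg eps n (c : R[i]) :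
  (c^*)%C * c = 1 -> unitary_eps s eps (c%:A%:M : 'M_(n + n)).
Proof.
move=> cc; apply: unitary_eps_scalar;
  by rewrite star_alg -scalerAl mul1r scalerA ?[c * _]mulrC cc scale1r.
Qed.

End StarAlgebra.

Section StarMorphism.
Variables (R : realType) (A B : algType R[i]) (s : A -> A) (t : B -> B) (f : A -> B).
Hypotheses (fD : forall x y, f (x + y) = f x + f y)
  (fM : forall x y, f (x * y) = f x * f y) (f1 : f 1 = 1)
  (fs : forall x, f (s x) = t (f x)).

Let f0 : f 0 = 0.
Proof. by apply: (addrI (f 0)); rewrite -fD !addr0. Qed.

HB.instance Definition _ := GRing.isNmodMorphism.Build A B f (f0, fD).
HB.instance Definition _ := GRing.isMonoidMorphism.Build A B f (f1, fM).

Lemma map_stab n k (M : 'M[A]_(n + n)) : map_mx f (stab k M) = stab k (map_mx f M).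
Proof.
by rewrite /stab !map_block_mx !map_mx0 !map_mx1 map_ulsubmx map_ursubmx map_dlsubmx map_drsubmx.
Qed.

Lemma map_mxstar eps n (M : 'M[A]_(n + n)) :
  map_mx f (mxstar s eps M) = mxstar t (f eps) (map_mx f M).
Proof.
have map_mxdag m p (N : 'M[A]_(m, p)) : map_mx f (mxdag s N) = mxdag t (map_mx f N).
  by apply/matrixP=> i j; rewrite !mxE fs.
have map_scale m p (N : 'M[A]_(m, p)) : map_mx f (eps *: N) = f eps *: map_mx f N.
  by apply/matrixP=> i j; rewrite !mxE fM.
rewrite /mxstar map_block_mx !map_scale !map_mxdag.
by rewrite map_ulsubmx map_ursubmx map_dlsubmx map_drsubmx.
Qed.

Lemma map_unitary_eps eps n (M : 'M[A]_(n + n)) :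
  unitary_eps s eps M -> unitary_eps t (f eps) (map_mx f M).
Proof. by case=> l r; split; rewrite -map_mxstar -map_mxM ?l ?r map_mx1. Qed.

Lemma map_comm_prod eps n (M : 'M[A]_(n + n)) :
  comm_prod s eps M -> comm_prod t (f eps) (map_mx f M).
Proof.
case=> l [l_unitary ->].
exists [seq (map_mx f p.1, map_mx f p.2) | p <- l]; split.
  move=> _ /mapP [p /l_unitary [u1 u2] ->].
  by split; apply: map_unitary_eps.
elim: l {l_unitary} => [|p l IHl] /=; first exact: map_mx1.
by rewrite !map_mxM !map_mxstar IHl.
Qed.

End StarMorphism.

Section Determinant.
Variables (R : realType) (K : comAlgType R[i]) (s : K -> K) (eps : K).

Lemma det_comm_prod n (M : 'M[K]_(n + n)) : comm_prod s eps M -> \det M = 1.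
Proof.
case=> l [l_unitary ->]; elim: l l_unitary => [|p l IHl] l_unitary /=.
  exact: det1.
have [[u1 _] [u2 _]] := l_unitary p (mem_head _ _).
have det_inv (g : 'M[K]_(n + n)) : mxstar s eps g *m g = 1%:M ->
    \det (mxstar s eps g) * \det g = 1.
  by move/(congr1 determinant); rewrite det_mulmx det1.
rewrite !det_mulmx IHl => [|p' lp']; last by apply: l_unitary; rewrite inE lp' orbT.
by rewrite mulr1 -mulrA mulrACA [\det p.1 * _]mulrC [\det p.2 * _]mulrC !det_inv ?mulr1.
Qed.

Lemma det_stab_scalar n k (a : K) : \det (stab k (a%:M : 'M_(n + n))) = a ^+ (n + n).
Proof.
rewrite /stab [a%:M]scalar_mx_block.
rewrite block_mxKul block_mxKur block_mxKdl block_mxKdr !block_mx0.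
by rewrite !det_lblock !det_scalar expr1n !mulr1 exprD.
Qed.

End Determinant.

Section PodlesCharacter.
Variables (R : realType) (q : R).
Local Notation C := R[i].
Local Open Scope complex_scope.
Local Notation toC := (real_complex R).

Lemma conjc_star : is_star (@conjc R : C^o -> C^o).
Proof.
split=> [x y|x y|x|c x]; rewrite ?rmorphD ?rmorphM ?conjcK //.
by rewrite mulrC.
Qed.

(* The first relation with [z0 = 0] forces [a ^+ 2 * (1 + q ^+ 2) = 1]. *)
Lemma podles_rels_character : q != 0 ->
  let a := (Num.sqrt (1 + q ^+ 2))^-1 in
  podles_rels q (@conjc R : C^o -> C^o) a%:C 0 (- q * a)%:C.
Proof.
move=> q0 a.
have a2 : a ^+ 2 * (1 + q ^+ 2) = 1.
  have q2_ge0 : 0 <= 1 + q ^+ 2 by rewrite addr_ge0 ?sqr_ge0.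
  rewrite exprVn sqr_sqrtr // mulVf // gt_eqF // ltr_pwDl ?sqr_ge0 //.
have scaleE (x y : C^o) : x *: y = x * y by [].
split; rewrite ?scaleE ?conjc0 ?conjc_real ?expr0n ?mulr0 ?add0r ?mul0r;
  rewrite -?(rmorphN toC, rmorphM toC, rmorphD toC) -?(rmorph1 toC, rmorph0 toC); try split.
all: apply: congr1; rewrite ?mulr0 //.
- by rewrite -[RHS]a2; field.
- by ring.
- by field.
Qed.
End PodlesCharacter.

Theorem theorem6p3 (R : realType) (q : R) (hq : q != 0)
  (A : algType (R[i])) (s : A -> A) (zm z0 z1 : A) :
  is_podles_sphere q s zm z0 z1 -> KU1_nontrivial s 1.
Proof.
case=> s_star [_ initial].
have [f [[fD fM f1 fZ [fs _ _ _]] _]] :=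
  initial _ _ _ _ _ (conjc_star R) (podles_rels_character hq).
have i_unit : ('i^* * 'i = 1 :> R[i])%C by simpc.
exists 1%N, ('i%C%:A%:M); split; first exact: unitary_eps_unit_alg.
move=> k /(map_comm_prod fD fM f1 fs) /det_comm_prod.
rewrite (map_stab fD fM f1) map_scalar_mx /= fZ f1 det_stab_scalar exprZn expr1n sqr_i scaleN1r.
by move/eqP; rewrite eqNr oner_eq0.
Qed.
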